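(* Let $k\in\mathbb{R}_{\ge0}$, let $(A,B,C)\in\mathbb{R}_+^3$ be a $k$-initial triple and $(a,b,c)\in\mathbb{R}_+^3$ a $0$-initial triple. Let $\mathbf{w}=[w_1,w_2,\dots]$ be an infinite reduced sequence, and for $n\ge1$ put $(X_n,Y_n,Z_n)=\mathcal{M}_k^{\mathbf{w}_n}(A,B,C)$ and $(x_n,y_n,z_n)=\mathcal{M}^{\mathbf{w}_n}(a,b,c)$. (1) If each of $1,2,3$ appears infinitely many times in $\mathbf{w}$, then there is a real number $q$ such that $\lim_{n\to\infty}X_n/x_n=\lim_{n\to\infty}Y_n/y_n=\lim_{n\to\infty}Z_n/z_n=q$. (2) If some index $i\in\{1,2,3\}$ appears only finitely many times in $\mathbf{w}$, then there is a real number $q$ such that for both indices $j\in\{1,2,3\}\setminus\{i\}$, the ratio of the $j$-th component of $(X_n,Y_n,Z_n)$ to the $j$-th component of $(x_n,y_n,z_n)$ converges to $q$ as $n\to\infty$.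
   Context: For $k\in\mathbb{R}_{\ge0}$ define maps on $\mathbb{R}_+^3$: $\mathcal{M}_{1;k}(X,Y,Z)=(k+Y+Z,Y,Z)$, $\mathcal{M}_{2;k}(X,Y,Z)=(X,k+X+Z,Z)$, $\mathcal{M}_{3;k}(X,Y,Z)=(X,Y,k+X+Y)$, and $\mathcal{M}_i=\mathcal{M}_{i;0}$. A $k$-initial triple is $(A,B,C)\in\mathbb{R}_+^3$ with $A\neq B+C+k$, $B\neq A+C+k$, $C\neq A+B+k$. A sequence $\mathbf{w}=[w_1,w_2,\dots]$ with $w_i\in\{1,2,3\}$ is reduced if $w_i\neq w_{i+1}$ for all $i$; $\mathbf{w}_n=[w_1,\dots,w_n]$, and $\mathcal{M}_k^{\mathbf{w}_n}=\mathcal{M}_{w_n;k}\circ\cdots\circ\mathcal{M}_{w_1;k}$, $\mathcal{M}^{\mathbf{w}_n}=\mathcal{M}_{w_n}\circ\cdots\circ\mathcal{M}_{w_1}$. (The triples $\mathcal{M}_k^{\mathbf{w}}(A,B,C)$ form the $k$-generalized Euclid tree; for $k=0$ the classical Euclid tree.) *)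

From Stdlib Require Import Reals Lra.
Open Scope R_scope.

Definition triple := (R * R * R)%type.
Definition t1 (t : triple) : R := fst (fst t).
Definition t2 (t : triple) : R := snd (fst t).
Definition t3 (t : triple) : R := snd t.
Definition tcomp (j : nat) (t : triple) : R :=
  match j with 1%nat => t1 t | 2%nat => t2 t | _ => t3 t end.

Definition Mk (k : R) (i : nat) (t : triple) : triple :=
  let '(X, Y, Z) := t in
  match i with
  | 1%nat => (k + Y + Z, Y, Z)
  | 2%nat => (X, k + X + Z, Z)
  | _ => (X, Y, k + X + Y)
  end.

(* w : nat -> nat, with w 0 = w_1, w 1 = w_2, ...
   Mseq k w n t = M_{w_n;k} o ... o M_{w_1;k} (t) *)
Fixpoint Mseq (k : R) (w : nat -> nat) (n : nat) (t : triple) : triple :=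
  match n with
  | O => t
  | S m => Mk k (w m) (Mseq k w m t)
  end.

Definition pos_triple (t : triple) : Prop := 0 < t1 t /\ 0 < t2 t /\ 0 < t3 t.

Definition k_initial (k : R) (t : triple) : Prop :=
  pos_triple t /\
  t1 t <> t2 t + t3 t + k /\ t2 t <> t1 t + t3 t + k /\ t3 t <> t1 t + t2 t + k.

Definition reduced (w : nat -> nat) : Prop :=
  (forall n, (w n = 1 \/ w n = 2 \/ w n = 3)%nat) /\ (forall n, w n <> w (S n)).

Definition appears_inf (w : nat -> nat) (i : nat) : Prop :=
  forall N : nat, exists n : nat, (N <= n)%nat /\ w n = i.

From Stdlib Require Import Reals Lra Lia Psatz Classical.
Open Scope R_scope.

(* Adding k to every entry turns M_{i;k} into M_i, so (X_n + k, Y_n + k, Z_n + k) is the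
   classical Euclid sequence of (A + k, B + k, C + k); it therefore suffices to compare two
   classical Euclid sequences U_n, u_n with u positive, and to check that k / x_n -> 0 in every
   coordinate that is updated infinitely often.
   After each step the updated entry of each triple is the sum of the two others, so its ratio
   U/u is a mediant of the ratios of the two other entries.  Hence the intervals spanned by the
   ratios of the two non-updated entries are nested and contain all three ratios.  The length of
   such an interval is |D| / P_n, where the cross determinant D of the two entries is invariant
   and their product P_n grows at least linearly, so all three ratios converge to a common
   limit. *)

Local Notation is_idx i := (1 <= i <= 3)%nat.

Ltac destruct_idx i := destruct i as [|[|[|[|i]]]]; try lia.
Ltac unfold_triple := unfold tcomp, t1, t2, t3 in *; simpl in *.

Lemma Un_cv_ext (u v : nat -> R) (l : R) :
  (forall n, u n = v n) -> Un_cv u l -> Un_cv v l.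
Proof.
  intros Huv Hu e He. destruct (Hu e He) as [N HN].
  exists N. intros n Hn. rewrite <- Huv. auto.
Qed.

Lemma Un_cv_squeeze (lo u hi : nat -> R) (l : R) :
  (forall n, lo n <= u n <= hi n) -> Un_cv lo l -> Un_cv hi l -> Un_cv u l.
Proof.
  intros Hb Hlo Hhi e He.
  destruct (Hlo e He) as [N1 HN1]. destruct (Hhi e He) as [N2 HN2].
  exists (max N1 N2). intros n Hn.
  specialize (HN1 n ltac:(lia)). specialize (HN2 n ltac:(lia)). specialize (Hb n).
  unfold Rdist in *. apply Rabs_def2 in HN1, HN2. apply Rabs_def1; lra.
Qed.

Lemma cv_infty_div (u : nat -> R) (c : R) :
  cv_infty u -> Un_cv (fun n => c / u n) 0.
Proof.
  intros Hu.
  assert (Hc : Un_cv (fun _ => c) c).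
  { intros e He. exists O. intros n _. unfold Rdist. rewrite Rminus_diag, Rabs_R0. lra. }
  rewrite <- (Rmult_0_r c). exact (CV_mult _ _ _ _ Hc (cv_infty_cv_0 u Hu)).
Qed.

Lemma cv_infty_linear_lb (u : nat -> R) (c : R) :
  0 < c -> (forall n, INR n * c <= u n) -> cv_infty u.
Proof.
  intros Hc Hu M. destruct (INR_unbounded (M / c)) as [N HN].
  exists N. intros n Hn.
  assert (HNn : INR N <= INR n) by (apply le_INR; exact Hn).
  assert (M < INR n * c).
  { replace M with (M / c * c) by (field; lra). apply Rmult_lt_compat_r; lra. }
  specialize (Hu n). lra.
Qed.

Lemma mediant_between A B a b : 0 < a -> 0 < b ->
  Rmin (A / a) (B / b) <= (A + B) / (a + b) <= Rmax (A / a) (B / b).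
Proof.
  intros Ha Hb. set (l := a / (a + b)).
  assert (0 < l) by (apply Rdiv_lt_0_compat; lra).
  assert (0 < 1 - l).
  { replace (1 - l) with (b / (a + b)) by (unfold l; field; lra).
    apply Rdiv_lt_0_compat; lra. }
  replace ((A + B) / (a + b)) with (l * (A / a) + (1 - l) * (B / b)) by (unfold l; field; lra).
  generalize (A / a) (B / b); intros r s.
  pose proof (Rmin_l r s); pose proof (Rmin_r r s); pose proof (Rmax_l r s); pose proof (Rmax_r r s).
  split; nra.
Qed.

Definition other1 (i : nat) : nat := match i with 1%nat => 2%nat | _ => 1%nat end.
Definition other2 (i : nat) : nat := match i with 3%nat => 2%nat | _ => 3%nat end.

Lemma other_idx i : is_idx i ->
  is_idx (other1 i) /\ is_idx (other2 i) /\ other1 i <> i /\ other2 i <> i.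
Proof. intros; destruct_idx i; simpl; lia. Qed.

Lemma idx_cases i j : is_idx i -> is_idx j -> j = i \/ j = other1 i \/ j = other2 i.
Proof. intros; destruct_idx i; destruct_idx j; simpl; auto. Qed.

Lemma reduced_idx w n : reduced w -> is_idx (w n).
Proof. intros [Hw _]. destruct (Hw n) as [-> | [-> | ->]]; lia. Qed.

Lemma appears_inf_other w i j : reduced w -> is_idx i -> is_idx j -> j <> i ->
  ~ appears_inf w i -> appears_inf w j.
Proof.
  intros Hw Hi Hj Hji Hfin.
  destruct (not_all_ex_not _ _ Hfin) as [N HN].
  assert (Hnot : forall n, (N <= n)%nat -> w n <> i) by (intros n Hn Hwn; apply HN; eauto).
  intros M. set (n := max N M).
  destruct (Nat.eq_dec (w n) j) as [E | E].
  - exists n. split; [lia | exact E].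
  - exists (S n). split; [lia |].
    pose proof (Hnot n ltac:(lia)). pose proof (Hnot (S n) ltac:(lia)).
    pose proof (reduced_idx w n Hw). pose proof (reduced_idx w (S n) Hw).
    pose proof (proj2 Hw n). lia.
Qed.

Lemma tcomp_Mk_other k i j p : is_idx i -> is_idx j -> j <> i ->
  tcomp j (Mk k i p) = tcomp j p.
Proof. intros; destruct p as [[X Y] Z]; destruct_idx i; destruct_idx j; reflexivity. Qed.

Lemma tcomp_Mk_sum i p : is_idx i ->
  tcomp i (Mk 0 i p) = tcomp (other1 i) (Mk 0 i p) + tcomp (other2 i) (Mk 0 i p).
Proof. intros; destruct p as [[X Y] Z]; destruct_idx i; unfold_triple; ring. Qed.

Lemma Mk_lb k i p c : 0 <= k -> 0 <= c -> (forall j, c <= tcomp j p) ->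
  forall j, c <= tcomp j (Mk k i p).
Proof.
  intros Hk Hc Hp j. destruct p as [[X Y] Z].
  pose proof (Hp 1%nat); pose proof (Hp 2%nat); pose proof (Hp 3%nat).
  destruct i as [|[|[|]]]; destruct j as [|[|[|]]]; unfold_triple; lra.
Qed.

Definition shift (c : R) (t : triple) : triple := (t1 t + c, t2 t + c, t3 t + c).

Lemma tcomp_shift j c t : tcomp j (shift c t) = tcomp j t + c.
Proof. destruct j as [|[|[|]]]; reflexivity. Qed.

Lemma Mk_shift k i t : Mk 0 i (shift k t) = shift k (Mk k i t).
Proof.
  destruct t as [[X Y] Z]. unfold shift; unfold_triple.
  destruct i as [|[|[|]]]; simpl; repeat apply (f_equal2 pair); ring.
Qed.

Lemma Mseq_shift k w n t : Mseq 0 w n (shift k t) = shift k (Mseq k w n t).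
Proof. induction n as [|n IH]; simpl; [reflexivity | rewrite IH; apply Mk_shift]. Qed.

Definition ratio (j : nat) (P p : triple) : R := tcomp j P / tcomp j p.

Definition ratio_min (i : nat) (P p : triple) : R :=
  Rmin (ratio (other1 i) P p) (ratio (other2 i) P p).

Definition ratio_max (i : nat) (P p : triple) : R :=
  Rmax (ratio (other1 i) P p) (ratio (other2 i) P p).

Definition cross (i : nat) (P p : triple) : R :=
  tcomp (other1 i) P * tcomp (other2 i) p - tcomp (other2 i) P * tcomp (other1 i) p.

Definition pair_prod (i : nat) (p : triple) : R :=
  tcomp (other1 i) p * tcomp (other2 i) p.

Lemma ratio_Mk_between i j P p : is_idx i -> is_idx j ->
  0 < tcomp (other1 i) (Mk 0 i p) -> 0 < tcomp (other2 i) (Mk 0 i p) ->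
  ratio_min i (Mk 0 i P) (Mk 0 i p) <= ratio j (Mk 0 i P) (Mk 0 i p)
  <= ratio_max i (Mk 0 i P) (Mk 0 i p).
Proof.
  intros Hi Hj Ha Hb. unfold ratio_min, ratio_max, ratio.
  destruct (idx_cases i j Hi Hj) as [-> | [-> | ->]].
  - rewrite !tcomp_Mk_sum by exact Hi. now apply mediant_between.
  - split; [apply Rmin_l | apply Rmax_l].
  - split; [apply Rmin_r | apply Rmax_r].
Qed.

Lemma ratio_max_sub_min i P p : 0 < tcomp (other1 i) p -> 0 < tcomp (other2 i) p ->
  ratio_max i P p - ratio_min i P p = Rabs (cross i P p) / pair_prod i p.
Proof.
  intros Ha Hb. unfold ratio_max, ratio_min, cross, pair_prod, ratio.
  set (a := tcomp (other1 i) p) in *. set (b := tcomp (other2 i) p) in *.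
  unfold Rdiv at 5. rewrite <- (Rabs_pos_eq (/ (a * b))) by (left; apply Rinv_0_lt_compat; nra).
  rewrite <- Rabs_mult.
  replace ((tcomp (other1 i) P * b - tcomp (other2 i) P * a) * / (a * b))
    with (tcomp (other1 i) P / a - tcomp (other2 i) P / b) by (field; lra).
  generalize (tcomp (other1 i) P / a) (tcomp (other2 i) P / b); intros r s.
  unfold Rmax, Rmin; destruct (Rle_dec r s); [rewrite Rabs_left1 | rewrite Rabs_right]; lra.
Qed.

Lemma cross_Mk_Mk i i' P p : is_idx i -> is_idx i' -> i <> i' ->
  Rabs (cross i' (Mk 0 i' (Mk 0 i P)) (Mk 0 i' (Mk 0 i p)))
  = Rabs (cross i (Mk 0 i P) (Mk 0 i p)).
Proof.
  intros. destruct p as [[x y] z]; destruct P as [[X Y] Z]. unfold cross.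
  destruct_idx i; destruct_idx i'; unfold_triple;
  first [ f_equal; ring | rewrite <- Rabs_Ropp; f_equal; ring ].
Qed.

Lemma pair_prod_Mk_Mk i i' p c : is_idx i -> is_idx i' -> i <> i' ->
  (forall j, c <= tcomp j p) -> 0 <= c ->
  pair_prod i (Mk 0 i p) + c * c <= pair_prod i' (Mk 0 i' (Mk 0 i p)).
Proof.
  intros Hi Hi' Hii' Hp Hc. destruct p as [[x y] z]. unfold pair_prod.
  pose proof (Hp 1%nat); pose proof (Hp 2%nat); pose proof (Hp 3%nat).
  destruct_idx i; destruct_idx i'; unfold_triple; nra.
Qed.

Lemma tcomp_Mk_Mk_le i i' j p : is_idx i -> is_idx i' -> i <> i' ->
  (forall j, 0 < tcomp j p) -> tcomp j (Mk 0 i p) <= tcomp j (Mk 0 i' (Mk 0 i p)).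
Proof.
  intros Hi Hi' Hii' Hp. destruct p as [[x y] z].
  pose proof (Hp 1%nat); pose proof (Hp 2%nat); pose proof (Hp 3%nat).
  destruct_idx i; destruct_idx i'; destruct j as [|[|[|]]]; unfold_triple; lra.
Qed.

Definition min_entry (u : triple) : R := Rmin (t1 u) (Rmin (t2 u) (t3 u)).

Section EuclidRatios.

Variables (w : nat -> nat) (u U : triple).
Hypotheses (Hw : reduced w) (Hu : pos_triple u).

Local Notation x m := (Mseq 0 w (S m) u).
Local Notation X m := (Mseq 0 w (S m) U).
Local Notation lo m := (ratio_min (w m) (X m) (x m)).
Local Notation hi m := (ratio_max (w m) (X m) (x m)).

Lemma min_entry_pos : 0 < min_entry u.
Proof. destruct Hu as [? [? ?]]. unfold min_entry. repeat apply Rmin_glb_lt; auto. Qed.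

Lemma Mseq_ge_min_entry n j : min_entry u <= tcomp j (Mseq 0 w n u).
Proof.
  pose proof min_entry_pos. revert j. induction n as [|n IH]; simpl.
  - unfold min_entry. destruct j as [|[|[|]]]; unfold_triple; eauto using Rmin_l, Rmin_r, Rle_trans.
  - apply Mk_lb; [lra | lra | exact IH].
Qed.

Lemma Mseq_pos n j : 0 < tcomp j (Mseq 0 w n u).
Proof. pose proof min_entry_pos. pose proof (Mseq_ge_min_entry n j). lra. Qed.

Lemma ratio_between m j : is_idx j -> lo m <= ratio j (X m) (x m) <= hi m.
Proof. intros Hj. apply ratio_Mk_between; auto using reduced_idx; apply (Mseq_pos (S m)). Qed.

Lemma ratio_bounds_nested m : lo m <= lo (S m) /\ hi (S m) <= hi m.
Proof.
  destruct (other_idx (w (S m)) (reduced_idx w (S m) Hw)) as [H1 [H2 [Hn1 Hn2]]].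
  assert (Hkeep : forall j, is_idx j -> j <> w (S m) ->
    ratio j (X (S m)) (x (S m)) = ratio j (X m) (x m)).
  { intros j Hj Hjn. unfold ratio. cbn [Mseq].
    rewrite !(tcomp_Mk_other 0 (w (S m)) j) by auto using reduced_idx. reflexivity. }
  unfold ratio_min at 2, ratio_max at 1. rewrite !Hkeep by auto.
  pose proof (ratio_between m _ H1). pose proof (ratio_between m _ H2).
  split; [apply Rmin_glb | apply Rmax_lub]; lra.
Qed.

Lemma cross_invariant m : Rabs (cross (w m) (X m) (x m)) = Rabs (cross (w 0%nat) (X 0) (x 0)).
Proof.
  induction m as [|m IH]; [reflexivity |]. rewrite <- IH. cbn [Mseq].
  apply cross_Mk_Mk; auto using reduced_idx. apply (proj2 Hw).
Qed.

Lemma pair_prod_ge m : INR m * (min_entry u * min_entry u) <= pair_prod (w m) (x m).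
Proof.
  pose proof min_entry_pos.
  induction m as [|m IH].
  - rewrite Rmult_0_l. unfold pair_prod. apply Rmult_le_pos; left; apply Mseq_pos.
  - rewrite S_INR.
    assert (pair_prod (w m) (x m) + min_entry u * min_entry u <= pair_prod (w (S m)) (x (S m))).
    { cbn [Mseq]. apply pair_prod_Mk_Mk; auto using reduced_idx, Mseq_ge_min_entry.
      - apply (proj2 Hw).
      - lra. }
    lra.
Qed.

Lemma pair_prod_cv_infty : cv_infty (fun m => pair_prod (w m) (x m)).
Proof.
  apply cv_infty_linear_lb with (min_entry u * min_entry u).
  - pose proof min_entry_pos. nra.
  - exact pair_prod_ge.
Qed.

Lemma ratio_cv : exists q, forall j, is_idx j -> Un_cv (fun m => ratio j (X m) (x m)) q.
Proof.
  assert (Hub : has_ub (fun m => lo m)).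
  { exists (hi 0). intros r [m ->].
    assert (hi m <= hi 0).
    { induction m as [|m IH]; [lra |]. pose proof (ratio_bounds_nested m). lra. }
    pose proof (ratio_between m 1 ltac:(lia)). lra. }
  destruct (growing_cv _ (fun m => proj1 (ratio_bounds_nested m)) Hub) as [q Hq].
  exists q. intros j Hj.
  set (D := Rabs (cross (w 0%nat) (X 0) (x 0))).
  apply (Un_cv_squeeze (fun m => lo m) _ (fun m => lo m + D / pair_prod (w m) (x m))).
  - intros m. pose proof (ratio_between m j Hj).
    unfold D. rewrite <- (cross_invariant m), <- ratio_max_sub_min by apply Mseq_pos. lra.
  - exact Hq.
  - rewrite <- (Rplus_0_r q). apply CV_plus; [exact Hq |].
    apply cv_infty_div, pair_prod_cv_infty.
Qed.

Lemma tcomp_Mseq_mono m n j : (m <= n)%nat -> tcomp j (x m) <= tcomp j (x n).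
Proof.
  induction 1 as [|n _ IH]; [lra |].
  eapply Rle_trans; [exact IH |]. cbn [Mseq].
  apply tcomp_Mk_Mk_le; auto using reduced_idx, Mseq_pos. apply (proj2 Hw).
Qed.

Lemma tcomp_Mseq_cv_infty j : is_idx j -> appears_inf w j -> cv_infty (fun m => tcomp j (x m)).
Proof.
  intros Hj Hinf M. destruct (pair_prod_cv_infty (M * M)) as [N HN].
  destruct (Hinf N) as [m [Hm Hwm]].
  exists m. intros n Hn.
  specialize (HN m Hm). cbv beta in HN. unfold pair_prod in HN.
  assert (M < tcomp j (x m)).
  { pose proof (Mseq_pos (S m) (other1 (w m))). pose proof (Mseq_pos (S m) (other2 (w m))).
    rewrite <- Hwm. cbn [Mseq] in *. rewrite tcomp_Mk_sum by auto using reduced_idx. nra. }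
  pose proof (tcomp_Mseq_mono m n j Hn). lra.
Qed.

End EuclidRatios.

Lemma Mseq_ratio_cv k T t w j q : reduced w -> pos_triple t -> is_idx j -> appears_inf w j ->
  Un_cv (fun n => ratio j (Mseq 0 w (S n) (shift k T)) (Mseq 0 w (S n) t)) q ->
  Un_cv (fun n => tcomp j (Mseq k w (S n) T) / tcomp j (Mseq 0 w (S n) t)) q.
Proof.
  intros Hw Ht Hj Hinf Hq. rewrite <- (Rminus_0_r q).
  apply (Un_cv_ext (fun n => ratio j (Mseq 0 w (S n) (shift k T)) (Mseq 0 w (S n) t)
                             - k / tcomp j (Mseq 0 w (S n) t))).
  - intros n. unfold ratio. rewrite Mseq_shift, tcomp_shift.
    pose proof (Mseq_pos w t Ht (S n) j). field. lra.
  - apply CV_minus; [exact Hq |]. apply cv_infty_div, tcomp_Mseq_cv_infty; auto.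
Qed.

Theorem theorem5p10 (k : R) (T t : triple) (w : nat -> nat) :
  0 <= k -> k_initial k T -> k_initial 0 t -> reduced w ->
  ((forall i, (1 <= i <= 3)%nat -> appears_inf w i) ->
     exists q : R, forall j, (1 <= j <= 3)%nat ->
       Un_cv (fun n => tcomp j (Mseq k w (S n) T) / tcomp j (Mseq 0 w (S n) t)) q)
  /\
  (forall i, (1 <= i <= 3)%nat -> ~ appears_inf w i ->
     exists q : R, forall j, (1 <= j <= 3)%nat -> j <> i ->
       Un_cv (fun n => tcomp j (Mseq k w (S n) T) / tcomp j (Mseq 0 w (S n) t)) q).
Proof.
  intros _ _ [Ht _] Hw.
  destruct (ratio_cv w t (shift k T) Hw Ht) as [q Hq].
  split.
  - intros Hall. exists q. intros j Hj. apply Mseq_ratio_cv; auto.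
  - intros i Hi Hfin. exists q. intros j Hj Hji.
    apply Mseq_ratio_cv; auto. exact (appears_inf_other w i j Hw Hi Hj Hji Hfin).
Qed.
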